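(* Consider the binary instrumental variable model described in the context, with both treatment and outcome possibly missing: $R^D\in\{0,1\}$ indicates that $D$ is observed and $R^Y\in\{0,1\}$ that $Y$ is observed, so the observed data are $(Z,R^D,R^D D,R^Y,R^Y Y)$. Assume the IV assumptions, that $R^D\perp\!\!\!\perp (U,D,Y)\mid Z$, and that $\mathbb{P}(R^D=1\mid Z=z)>0$ for $z=0,1$. Then: (1ZD$\oplus$2Z) If $R^Y\perp\!\!\!\perp (U,Y)\mid (Z,D,R^D)$ and $\mathbb{P}(R^Y=1\mid Z=z,D=d,R^D=1)>0$ for all $z$ and $d$, then the CACE is identifiable. (1UD$\oplus$2Z) If $R^Y\perp\!\!\!\perp (Z,Y)\mid (U,D,R^D)$ and $\mathbb{P}(R^Y=1\mid U=c,D=d,R^D=1)>0$ for $d=0,1$, then the CACE is identifiable. (1UY$\oplus$2Z) If $R^Y\perp\!\!\!\perp (Z,D)\mid (U,Y,R^D)$, $Y$ is binary, and $\mathbb{P}(R^Y=1\mid U=c,Y=y,R^D=1)>0$ for $y=0,1$, then the CACE is identifiable. (1DY$\oplus$2Z) If $R^Y\perp\!\!\!\perp (Z,U)\mid (D,Y,R^D)$, $Y$ is binary, noncompliance is two-sided, $\mathbb{P}(R^Y=1\mid D=d,Y=y,R^D=1)>0$ for all $d$ and $y$, and $Y\not\!\perp\!\!\!\perp Z\mid (D=d,R^D=1)$ for $d=0,1$, then the CACE is identifiable. (1ZY$\oplus$2Z) If $R^Y\perp\!\!\!\perp (U,D)\mid (Z,Y,R^D)$, $Y$ is binary, noncompliance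 is two-sided, $\mathbb{P}(R^Y=1\mid Z=z,Y=y,R^D=1)>0$ for all $z$ and $y$, and $Y\not\!\perp\!\!\!\perp D\mid Z=z$ for $z=0,1$, then the CACE is identifiable.
   Context: $Z\in\{0,1\}$ is a binary instrument, $D\in\{0,1\}$ the treatment received, $Y$ the outcome (real-valued; ''binary $Y$'' means $Y\in\{0,1\}$). Potential values $D(z),Y(z)$ for $z=0,1$ are defined with respect to the instrument; observed values are $D=ZD(1)+(1-Z)D(0)$ and $Y=ZY(1)+(1-Z)Y(0)$. The latent compliance status $U$ is $a$ (always-taker) if $D(1)=D(0)=1$, $c$ (complier) if $D(1)=1,D(0)=0$, $d$ (defier) if $D(1)=0,D(0)=1$, $n$ (never-taker) if $D(1)=D(0)=0$. IV assumptions: (1) $Z\perp\!\!\!\perp\{D(1),D(0),Y(1),Y(0)\}$; (2) $D(1)\ge D(0)$ for all units (no defiers); (3) $\mathbb{E}\{D(1)-D(0)\}\neq0$; (4) $Y(1)=Y(0)$ for units with $U\in\{a,n\}$. The complier average causal effect is $\mathrm{CACE}=\mathbb{E}\{Y(1)-Y(0)\mid U=c\}$. One-sided noncompliance means $D(0)=0$ for all units (only compliers and never-takers); two-sided noncompliance is the general case in which units in both arms may fail to comply (always-takers and never-takers may both be present). Independence statements refer to the joint distribution of $(Z,U,D,Y,R^D,R^Y)$. The CACE is identifiable if it is uniquely determined by the distribution of the observed data among all joint distributions satisfying the stated assumptions. *)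

From HB Require Import structures.
From mathcomp Require Import all_boot all_order all_algebra.
From mathcomp Require Import all_classical all_reals all_analysis.

Set Implicit Arguments.
Unset Strict Implicit.
Unset Printing Implicit Defensive.

Import Order.TTheory GRing.Theory Num.Theory.
Local Open Scope classical_set_scope.
Local Open Scope ring_scope.

Inductive status := Always | Complier | Defier | Never.

Definition status_of (d1 d0 : bool) : status :=
  match d1, d0 with
  | true, true => Always
  | true, false => Complier
  | false, true => Defier
  | false, false => Never
  end.

Definition status_enc (u : status) : bool * bool :=
  match u with
  | Always => (true, true) | Complier => (true, false)
  | Defier => (false, true) | Never => (false, false)
  end.
Definition status_dec (p : bool * bool) : status := status_of p.1 p.2.
Lemma status_encK : cancel status_enc status_dec. Proof. by case. Qed.

HB.instance Definition _ := Equality.copy status (can_type status_encK).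
HB.instance Definition _ := Choice.copy status (can_type status_encK).
HB.instance Definition _ := isPointed.Build status Never.
HB.instance Definition _ := @isMeasurable.Build default_measure_display
  status discrete_measurable discrete_measurable0
  discrete_measurableC discrete_measurableU.

Section Model.
Context {R : realType} {d : measure_display} {T : measurableType d}.

Record ivmodel := IVModel {
  Zv  : T -> bool;
  D1v : T -> bool;
  D0v : T -> bool;
  Y1v : T -> R;
  Y0v : T -> R;
  RDv : T -> bool;
  RYv : T -> bool
}.

Variable P : probability T R.
Variable M : ivmodel.

Definition Uv (x : T) : status := status_of (D1v M x) (D0v M x).
Definition Dv (x : T) : bool := if Zv M x then D1v M x else D0v M x.
Definition Yv (x : T) : R := if Zv M x then Y1v M x else Y0v M x.

Definition obs (x : T) : (bool * bool * bool * bool * R)%type :=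
  (Zv M x, RDv M x, RDv M x && Dv x, RYv M x, if RYv M x then Yv x else 0).


Definition indep {dA dB} {A : measurableType dA} {B : measurableType dB}
  (X : T -> A) (Y : T -> B) : Prop :=
  forall (SA : set A) (SB : set B), measurable SA -> measurable SB ->
    P (X @^-1` SA `&` Y @^-1` SB) = (P (X @^-1` SA) * P (Y @^-1` SB))%E.

(* X and Y conditionally independent given the (discrete) event C = k:
   P(X in SA, Y in SB, C = k) P(C = k) = P(X in SA, C = k) P(Y in SB, C = k),
   i.e. P(X,Y | C=k) = P(X | C=k) P(Y | C=k) whenever P(C = k) > 0. *)
Definition cindep_at {dA dB} {A : measurableType dA} {B : measurableType dB}
  {K : Type} (X : T -> A) (Y : T -> B) (C : T -> K) (k : K) : Prop :=
  forall (SA : set A) (SB : set B), measurable SA -> measurable SB ->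
    (P (X @^-1` SA `&` Y @^-1` SB `&` C @^-1` [set k]) * P (C @^-1` [set k]) =
     P (X @^-1` SA `&` C @^-1` [set k]) * P (Y @^-1` SB `&` C @^-1` [set k]))%E.

(* X independent of Y given C (C takes finitely many values in every use) *)
Definition cindep {dA dB} {A : measurableType dA} {B : measurableType dB}
  {K : Type} (X : T -> A) (Y : T -> B) (C : T -> K) : Prop :=
  forall k : K, cindep_at X Y C k.

Definition Pr (E : T -> Prop) : \bar R := P [set x | E x].

(* IV assumptions (1)-(4), plus measurability of the random variables and
   finite means of the potential outcomes (so that the CACE is defined). *)
Definition iv_assumptions : Prop :=
  (measurable_fun setT (Zv M) /\ measurable_fun setT (D1v M) /\
   measurable_fun setT (D0v M) /\ measurable_fun setT (Y1v M) /\
   measurable_fun setT (Y0v M) /\ measurable_fun setT (RDv M) /\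
   measurable_fun setT (RYv M)) /\
  P.-integrable setT (fun x => (Y1v M x)%:E) /\
  P.-integrable setT (fun x => (Y0v M x)%:E) /\
  indep (Zv M) (fun x => (D1v M x, D0v M x, Y1v M x, Y0v M x)) /\
  (forall x, D0v M x -> D1v M x) /\
  (\int[P]_x ((D1v M x)%:R - (D0v M x)%:R : R)%:E != 0)%E /\
  (forall x, Uv x = Always \/ Uv x = Never -> Y1v M x = Y0v M x).

Definition rd_assumptions : Prop :=
  cindep (RDv M) (fun x => (Uv x, Dv x, Yv x)) (Zv M) /\
  forall z : bool, (0 < Pr (fun x => RDv M x = true /\ Zv M x = z))%E.

Definition binaryY : Prop := forall x, Yv x = 0 \/ Yv x = 1.

Definition two_sided : Prop :=
  (0 < Pr (fun x => Uv x = Always))%E /\ (0 < Pr (fun x => Uv x = Never))%E.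

Definition case_ZD : Prop :=
  cindep (RYv M) (fun x => (Uv x, Yv x)) (fun x => (Zv M x, Dv x, RDv M x)) /\
  forall z dd : bool, (0 < Pr (fun x => [/\ RYv M x = true, Zv M x = z,
                                         Dv x = dd & RDv M x = true]))%E.

Definition case_UD : Prop :=
  cindep (RYv M) (fun x => (Zv M x, Yv x)) (fun x => (Uv x, Dv x, RDv M x)) /\
  forall dd : bool, (0 < Pr (fun x => [/\ RYv M x = true, Uv x = Complier,
                                       Dv x = dd & RDv M x = true]))%E.

Definition case_UY : Prop :=
  cindep (RYv M) (fun x => (Zv M x, Dv x)) (fun x => (Uv x, Yv x, RDv M x)) /\
  binaryY /\
  forall y : bool, (0 < Pr (fun x => [/\ RYv M x = true, Uv x = Complier,
                                      Yv x = y%:R & RDv M x = true]))%E.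

Definition case_DY : Prop :=
  cindep (RYv M) (fun x => (Zv M x, Uv x)) (fun x => (Dv x, Yv x, RDv M x)) /\
  binaryY /\ two_sided /\
  (forall (dd y : bool), (0 < Pr (fun x => [/\ RYv M x = true, Dv x = dd,
                                     Yv x = y%:R & RDv M x = true]))%E) /\
  forall dd : bool, ~ cindep_at Yv (Zv M) (fun x => (Dv x, RDv M x)) (dd, true).

Definition case_ZY : Prop :=
  cindep (RYv M) (fun x => (Uv x, Dv x)) (fun x => (Zv M x, Yv x, RDv M x)) /\
  binaryY /\ two_sided /\
  (forall (z y : bool), (0 < Pr (fun x => [/\ RYv M x = true, Zv M x = z,
                                     Yv x = y%:R & RDv M x = true]))%E) /\
  forall z : bool, ~ cindep_at Yv Dv (Zv M) z.

Definition cace : R :=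
  fine (\int[P]_(x in [set x | Uv x = Complier]) (Y1v M x - Y0v M x)%:E) /
  fine (P [set x | Uv x = Complier]).

End Model.

Arguments ivmodel : clear implicits.
Arguments ivmodel R {d} T.

Definition same_obs_law {R : realType}
  {d1} {T1 : measurableType d1} (P1 : probability T1 R) (M1 : ivmodel R T1)
  {d2} {T2 : measurableType d2} (P2 : probability T2 R) (M2 : ivmodel R T2) :=
  forall S : set (bool * bool * bool * bool * R)%type, measurable S ->
    P1 (obs M1 @^-1` S) = P2 (obs M2 @^-1` S).

(* The CACE is identifiable under the assumption class A: it is uniquely
   determined by the observed-data distribution among all joint
   distributions (realised on arbitrary probability spaces) satisfying A. *)
Definition cace_identifiable {R : realType}
  (A : forall d (T : measurableType d), probability T R -> ivmodel R T -> Prop) :=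
  forall d1 (T1 : measurableType d1) (P1 : probability T1 R) (M1 : ivmodel R T1)
         d2 (T2 : measurableType d2) (P2 : probability T2 R) (M2 : ivmodel R T2),
    A d1 T1 P1 M1 -> A d2 T2 P2 M2 -> same_obs_law P1 M1 P2 M2 ->
    cace P1 M1 = cace P2 M2.

(* Under the IV assumptions the CACE is (E Y(1) - E Y(0)) / P(U = c): always- and
   never-takers contribute equally to E Y(1) and E Y(0), and E Y(1) - E Y(0) only depends
   on the signed measure law(Y(1)) - law(Y(0)).  As R^D is ignorable given Z, the units of
   arm z with R^D = 1 are a representative sample of (U, D(z), Y(z)); so P(U = c) is
   observed and law(Y(z)) is the law of Y in that sample.  What remains is to recover the
   law of Y (or of Y among compliers) in these samples from their complete cases:
   - 1ZD: reweight the complete cases within each cell (Z, D);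
   - 1UD, 1UY: always- and never-takers respond alike in both arms, so their complete
     cases can be removed from the arm where they share the compliers' treatment; the
     compliers' response rate is then constant along D (resp. Y), and for binary Y a
     2x2 linear system yields the complier effect;
   - 1DY, 1ZY: for binary Y the inverse response rates of the strata (D, Y) (resp. (Z, Y))
     solve a 2x2 linear system, which is regular exactly because Y is not independent of
     Z (resp. D) in the stratum. *)

From HB Require Import structures.
From mathcomp Require Import all_boot all_order all_algebra.
From mathcomp Require Import all_classical all_reals all_analysis.
From mathcomp Require Import ring lra.

Set Implicit Arguments.
Unset Strict Implicit.
Unset Printing Implicit Defensive.

Import Order.TTheory GRing.Theory Num.Theory.
Local Open Scope classical_set_scope.
Local Open Scope ring_scope.

Lemma pair_equalE (A B : Type) (a c : A) (b e : B) : ((a, b) = (c, e)) = (a = c /\ b = e).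
Proof. by apply/propext; split=> [[-> ->]|[-> ->]]. Qed.

Section Events.
Context {R : realType} {d : measure_display} {T : measurableType d}.
Variable P : probability T R.
Implicit Types E F : T -> Prop.

Definition pr E : R := fine (P [set x | E x]).
Definition mevent E := measurable [set x | E x].

Lemma eq_pr E F : (forall x, E x <-> F x) -> pr E = pr F.
Proof. by move=> EF; rewrite /pr; congr (fine (P _)); apply/seteqP; split=> x /EF. Qed.

Lemma mevent_ext E F : (forall x, E x <-> F x) -> mevent E -> mevent F.
Proof.
by move=> EF; rewrite /mevent (_ : [set x | F x] = [set x | E x]) //; apply/seteqP; split=> x /EF.
Qed.

Lemma prE E : mevent E -> P [set x | E x] = (pr E)%:E.
Proof. by move=> mE; rewrite /pr fineK //; apply: fin_num_measure. Qed.

Lemma pr_ge0 E : 0 <= pr E.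
Proof. exact/fine_ge0/measure_ge0. Qed.

Lemma Pr_gt0 E F : (forall x, E x <-> F x) -> mevent F -> (0 < Pr P E)%E -> 0 < pr F.
Proof.
move=> EF mF; rewrite -lte_fin -prE // /Pr (_ : [set x | E x] = [set x | F x]) //.
by apply/seteqP; split=> x /EF.
Qed.

Lemma mevent_and E F : mevent E -> mevent F -> mevent (fun x => E x /\ F x).
Proof. exact: measurableI. Qed.

Lemma mevent_or E F : mevent E -> mevent F -> mevent (fun x => E x \/ F x).
Proof. exact: measurableU. Qed.

Lemma mevent_not E : mevent E -> mevent (fun x => ~ E x).
Proof. exact: measurableC. Qed.

Lemma mevent_cst (Q : Prop) : mevent (fun _ => Q).
Proof.
have [q|nq] := pselect Q; rewrite /mevent.
  by rewrite (_ : [set _ | Q] = setT) //; apply/seteqP; split.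
by rewrite (_ : [set _ | Q] = set0) //; apply/seteqP; split.
Qed.

Lemma mevent_preimage {d'} {U : measurableType d'} (f : T -> U) (A : set U) :
  measurable_fun setT f -> measurable A -> mevent (fun x => A (f x)).
Proof. by move=> mf mA; rewrite /mevent -[X in measurable X]setTI; exact: mf. Qed.

Lemma mevent_eq {d'} {U : measurableType d'} (f : T -> U) (a : U) :
  measurable_fun setT f -> measurable [set a] -> mevent (fun x => f x = a).
Proof. exact: mevent_preimage. Qed.

Lemma mevent_pair_eq {A B : Type} (f : T -> A) (g : T -> B) a b :
  mevent (fun x => f x = a /\ g x = b) -> mevent (fun x => (f x, g x) = (a, b)).
Proof. by apply: mevent_ext => x; rewrite pair_equalE. Qed.

Lemma pr_or E F : mevent E -> mevent F -> (forall x, E x -> F x -> False) ->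
  pr (fun x => E x \/ F x) = pr E + pr F.
Proof.
move=> mE mF EF; apply: EFin_inj; rewrite EFinD -!prE //; last exact: mevent_or.
by rewrite -measureU //; apply/seteqP; split=> x //= [] /EF h /h.
Qed.

Lemma pr_split E F : mevent E -> mevent F ->
  pr E = pr (fun x => E x /\ F x) + pr (fun x => E x /\ ~ F x).
Proof.
move=> mE mF; rewrite -pr_or; last by move=> x [_ +] [].
- by apply: eq_pr => x; have [Fx|nFx] := pselect (F x); tauto.
- exact: mevent_and.
- exact/mevent_and/mevent_not.
Qed.

Lemma pr_split_bool E (X : T -> bool) : mevent E -> measurable_fun setT X ->
  pr E = pr (fun x => E x /\ X x = false) + pr (fun x => E x /\ X x = true).
Proof.
move=> mE mX; have mXt : mevent (fun x => X x = true) by exact: mevent_eq.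
rewrite addrC (pr_split mE mXt); congr (_ + _).
by apply: eq_pr => x; case: (X x); intuition.
Qed.

Lemma le_pr E F : mevent E -> mevent F -> (forall x, E x -> F x) -> pr E <= pr F.
Proof.
move=> mE mF EF; rewrite (pr_split mF mE) (@eq_pr E (fun x => F x /\ E x)).
  by rewrite lerDl pr_ge0.
by move=> x; split=> [Ex|[]//]; split=> //; exact: EF.
Qed.

Lemma pr_and_cst {U : Type} E (S : set U) (a : U) :
  pr (fun x => E x /\ S a) = \1_S a * pr E.
Proof.
rewrite indicE; have [/set_mem Sa|] := boolP (a \in S).
  by rewrite mul1r; apply: eq_pr; tauto.
rewrite notin_setE mul0r => nSa; rewrite /pr (_ : [set x | _] = set0) ?measure0 //.
by apply/seteqP; split=> x // [].
Qed.

Lemma cindep_at_pr {dA dB} {A : measurableType dA} {B : measurableType dB} {K : Type}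
    (X : T -> A) (Y : T -> B) (C : T -> K) k SA SB (E1 E2 E3 E4 : T -> Prop) :
  measurable_fun setT X -> measurable_fun setT Y -> mevent (fun x => C x = k) ->
  cindep_at P X Y C k -> measurable SA -> measurable SB ->
  (forall x, (SA (X x) /\ SB (Y x)) /\ C x = k <-> E1 x) ->
  (forall x, C x = k <-> E2 x) ->
  (forall x, SA (X x) /\ C x = k <-> E3 x) ->
  (forall x, SB (Y x) /\ C x = k <-> E4 x) ->
  pr E1 * pr E2 = pr E3 * pr E4.
Proof.
move=> mX mY mC XY mA mB h1 h2 h3 h4.
have mXA := mevent_preimage mX mA; have mYB := mevent_preimage mY mB.
have m1 : mevent E1 by apply: mevent_ext h1 _; do !apply: mevent_and.
have m2 : mevent E2 by exact: mevent_ext h2 _.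
have m3 : mevent E3 by apply: mevent_ext h3 _; exact: mevent_and.
have m4 : mevent E4 by apply: mevent_ext h4 _; exact: mevent_and.
move: (XY SA SB mA mB).
rewrite (_ : _ `&` _ `&` _ = [set x | E1 x]); last by apply/seteqP; split=> x /h1.
rewrite (_ : X @^-1` SA `&` _ = [set x | E3 x]); last by apply/seteqP; split=> x /h3.
rewrite (_ : Y @^-1` SB `&` _ = [set x | E4 x]); last by apply/seteqP; split=> x /h4.
rewrite (_ : C @^-1` _ = [set x | E2 x]); last by apply/seteqP; split=> x /h2.
by rewrite !prE // -!EFinM => -[].
Qed.

Lemma indep_pr {dA dB} {A : measurableType dA} {B : measurableType dB}
    (X : T -> A) (Y : T -> B) SA SB (E1 E2 E3 : T -> Prop) :
  measurable_fun setT X -> measurable_fun setT Y ->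
  indep P X Y -> measurable SA -> measurable SB ->
  (forall x, SA (X x) /\ SB (Y x) <-> E1 x) ->
  (forall x, SA (X x) <-> E2 x) ->
  (forall x, SB (Y x) <-> E3 x) ->
  pr E1 = pr E2 * pr E3.
Proof.
move=> mX mY XY mA mB h1 h2 h3.
have mXA := mevent_preimage mX mA; have mYB := mevent_preimage mY mB.
have m1 : mevent E1 by apply: mevent_ext h1 _; exact: mevent_and.
have m2 : mevent E2 by exact: mevent_ext h2 _.
have m3 : mevent E3 by exact: mevent_ext h3 _.
move: (XY SA SB mA mB).
rewrite (_ : _ `&` _ = [set x | E1 x]); last by apply/seteqP; split=> x /h1.
rewrite (_ : X @^-1` SA = [set x | E2 x]); last by apply/seteqP; split=> x /h2.
rewrite (_ : Y @^-1` SB = [set x | E3 x]); last by apply/seteqP; split=> x /h3.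
by rewrite !prE // -!EFinM => -[].
Qed.

End Events.

Section Cramer.
Variable F : fieldType.
Implicit Types (a : bool -> bool -> F) (t m : bool -> F).

Definition det2 a := a false false * a true true - a false true * a true false.
Definition cramer2 a m := (a false false * m true - a true false * m false) / det2 a.

Lemma det2_scale_cols a t : det2 (fun i j => a i j * t j) = det2 a * (t false * t true).
Proof. by rewrite /det2; ring. Qed.

Section LinearSystem.
Variables (a : bool -> bool -> F) (t m : bool -> F).
Hypothesis system : forall i, a i false * t false + a i true * t true = m i.

Lemma cramer2_snd : det2 a != 0 -> t true = cramer2 a m.
Proof. by move=> det_neq0; apply: (mulIf det_neq0); rewrite divfK // -!system /det2; ring. Qed.

Lemma det2_eq0_snd : det2 a = 0 -> a false true * m true = a true true * m false.
Proof.
move=> det0; rewrite -!system.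
transitivity (a true true * (a false false * t false + a false true * t true) - t false * det2 a).
  by rewrite /det2; ring.
by rewrite det0 mulr0 subr0.
Qed.

End LinearSystem.
End Cramer.

Lemma proportional_of_scaled (F : fieldType) (I : Type) (a l : I -> F) (n c : F) :
  (forall i, a i * n = l i * c) -> (n = 0 -> forall i, a i = 0) ->
  exists h, forall i, a i = l i * h.
Proof.
move=> scaled n0; have [/n0 a0|n_neq0] := eqVneq n 0.
  by exists 0 => i; rewrite mulr0 a0.
by exists (c / n) => i; rewrite mulrA -scaled mulfK.
Qed.

Section BinaryOutcome.
Context {R : realType} {d : measure_display} {T : measurableType d}.
Variables (P : probability T R) (Y : T -> R).
Hypotheses (mY : measurable_fun setT Y) (binY : forall x, Y x = 0 \/ Y x = 1).

Let mevent_Yeq (y : R) : mevent (fun x => Y x = y).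
Proof. by apply: mevent_eq => //; exact: measurable_set1. Qed.

Lemma pr_split_binary E : mevent E ->
  pr P E = pr P (fun x => E x /\ Y x = 0) + pr P (fun x => E x /\ Y x = 1).
Proof.
move=> mE; rewrite (pr_split P mE (mevent_Yeq 1)) addrC; congr (_ + _).
have one_neq0 : (1 : R) <> 0 by apply/eqP; exact: oner_neq0.
by apply: eq_pr => x; case: (binY x) => ->; split=> -[Ex h]; split=> //; exact/nesym.
Qed.

Lemma pr_binary E (S : set R) : mevent E -> measurable S ->
  pr P (fun x => E x /\ S (Y x)) =
  \1_S 0 * pr P (fun x => E x /\ Y x = 0) + \1_S 1 * pr P (fun x => E x /\ Y x = 1).
Proof.
move=> mE mS; rewrite pr_split_binary; last exact/mevent_and/mevent_preimage.
congr (_ + _); rewrite -pr_and_cst; apply: eq_pr => x.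
  by split=> [[[Ex +] Yx]|[[Ex Yx]]]; rewrite Yx.
by split=> [[[Ex +] Yx]|[[Ex Yx]]]; rewrite Yx.
Qed.

Lemma pr_binary1 E (S : set R) : mevent E -> measurable S ->
  pr P (fun x => E x /\ S (Y x)) =
  \1_S 0 * (pr P E - pr P (fun x => E x /\ Y x = 1)) + \1_S 1 * pr P (fun x => E x /\ Y x = 1).
Proof. by move=> mE mS; rewrite pr_binary // [pr P E](pr_split_binary mE) addrK. Qed.

Section BinaryTable.
Variables (X : T -> bool) (K : Type) (C : T -> K) (k : K).
Hypotheses (mX : measurable_fun setT X) (mC : mevent (fun x => C x = k)).

Let cell b (i : bool) := pr P (fun x => (C x = k /\ X x = b) /\ Y x = i%:R).

Let table (SA : set R) (SB : set bool) :=
  \1_SB false * (\1_SA 0 * cell false false + \1_SA 1 * cell false true) +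
  \1_SB true * (\1_SA 0 * cell true false + \1_SA 1 * cell true true).

Let pr_table (SA : set R) (SB : set bool) : measurable SA ->
  P [set x | (SA (Y x) /\ SB (X x)) /\ C x = k] = (table SA SB)%:E.
Proof.
move=> mSA; have mE : mevent (fun x => (SA (Y x) /\ SB (X x)) /\ C x = k).
  by apply: mevent_and => //; apply: mevent_and; exact: mevent_preimage.
have mCX (b : bool) : mevent (fun x => C x = k /\ X x = b).
  by apply: mevent_and => //; exact: mevent_eq.
rewrite prE // (pr_split_bool P mE mX); congr (_%:E).
have cellE b : pr P (fun x => ((SA (Y x) /\ SB (X x)) /\ C x = k) /\ X x = b) =
    \1_SB b * (\1_SA 0 * cell b false + \1_SA 1 * cell b true).
  rewrite (@eq_pr _ _ _ _ _ (fun x => ((C x = k /\ X x = b) /\ SA (Y x)) /\ SB b)).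
    by rewrite pr_and_cst (pr_binary (mCX b) mSA).
  move=> x; split=> [[[[SAx SBx] Cx] Xx]|[[[Cx Xx] SAx] SBb]].
    by rewrite -Xx.
  by rewrite Xx.
by rewrite !cellE.
Qed.

(* The defect of the product rule is [det2 cell] times a factor depending on SA, SB only. *)
Lemma cindep_at_det2 : det2 cell = 0 -> cindep_at P Y X C k.
Proof.
move=> det0 SA SB mSA _.
rewrite (_ : _ `&` _ `&` _ = [set x | (SA (Y x) /\ SB (X x)) /\ C x = k]) //.
rewrite (_ : Y @^-1` SA `&` _ = [set x | (SA (Y x) /\ setT (X x)) /\ C x = k]); last first.
  by apply/seteqP; split=> x /= => [[]|[[]]].
rewrite (_ : X @^-1` SB `&` _ = [set x | (setT (Y x) /\ SB (X x)) /\ C x = k]); last first.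
  by apply/seteqP; split=> x /= => [[]|[[]]].
rewrite (_ : C @^-1` _ = [set x | (setT (Y x) /\ setT (X x)) /\ C x = k]); last first.
  by apply/seteqP; split=> x /= => [|[]//].
rewrite !pr_table // -!EFinM /table !indicT /=; congr (_%:E).
apply/eqP; rewrite -subr_eq0; apply/eqP; move: det0; rewrite /det2.
set a00 := cell false false; set a01 := cell false true.
set a10 := cell true false; set a11 := cell true true => det0.
transitivity ((a00 * a11 - a01 * a10) * ((\1_SA 0 - \1_SA 1) * (\1_SB false - \1_SB true))).
  by ring.
by rewrite det0 mul0r.
Qed.

End BinaryTable.
End BinaryOutcome.

Lemma measurable_status_of {dX} {X : measurableType dX} (f g : X -> bool) :
  measurable_fun setT f -> measurable_fun setT g ->
  measurable_fun setT (fun x => status_of (f x) (g x)).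
Proof.
move=> mf mg _ A _; rewrite setTI.
have cell b c : mevent (fun x => (f x = b /\ g x = c) /\ A (status_of b c)).
  by apply: mevent_and; [apply: mevent_and; exact: mevent_eq | exact: mevent_cst].
apply: (mevent_ext _ (mevent_or (mevent_or (cell true true) (cell true false))
                                (mevent_or (cell false true) (cell false false)))).
by move=> x; case: (f x) (g x) => -[]; intuition (try discriminate).
Qed.

Definition taker (b : bool) := if b then Always else Never.

(* (U, D(z), Y(z)) as a function of (D(1), D(0), Y(1), Y(0)). *)
Definition potential_at {R : realType} (z : bool) (p : bool * bool * R * R) :=
  (status_of p.1.1.1 p.1.1.2, if z then p.1.1.1 else p.1.1.2, if z then p.1.2 else p.2).

Lemma measurable_potential_at {R : realType} z : measurable_fun setT (@potential_at R z).
Proof.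
have mD1 : measurable_fun setT (fun p : bool * bool * R * R => p.1.1.1).
  exact: measurableT_comp measurable_fst (measurableT_comp measurable_fst measurable_fst).
have mD0 : measurable_fun setT (fun p : bool * bool * R * R => p.1.1.2).
  exact: measurableT_comp measurable_snd (measurableT_comp measurable_fst measurable_fst).
have mY1 : measurable_fun setT (fun p : bool * bool * R * R => p.1.2).
  exact: measurableT_comp measurable_snd measurable_fst.
apply: measurable_fun_pair; first apply: measurable_fun_pair.
- exact: measurable_status_of.
- by case: z.
- by case: z; [|exact: measurable_snd].
Qed.

Section Model.
Context {R : realType} {d : measure_display} {T : measurableType d}.
Variables (P : probability T R) (M : ivmodel R T).

Definition Dz z x := if z then D1v M x else D0v M x.
Definition Yz z x := if z then Y1v M x else Y0v M x.

(* All cells are taken jointly with [R^D = 1]; [obsZDY] and [pZUYr] also require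
   [R^Y = 1].  Only the [obs] cells are functionals of the observed law. *)
Definition obsZ z := pr P (fun x => RDv M x = true /\ Zv M x = z).
Definition obsZD z b := pr P (fun x => RDv M x = true /\ Zv M x = z /\ Dv M x = b).
Definition obsZDY z b S := pr P (fun x =>
  RDv M x = true /\ Zv M x = z /\ Dv M x = b /\ RYv M x = true /\ S (Yv M x)).
Definition pZY z S := pr P (fun x => RDv M x = true /\ Zv M x = z /\ S (Yv M x)).
Definition pZDY z b y := pr P (fun x =>
  (RDv M x = true /\ Zv M x = z /\ Dv M x = b) /\ Yv M x = y).
Definition pZUY z u S := pr P (fun x =>
  RDv M x = true /\ Zv M x = z /\ Uv M x = u /\ S (Yv M x)).
Definition pZUYr z u S := pr P (fun x =>
  RDv M x = true /\ Zv M x = z /\ Uv M x = u /\ RYv M x = true /\ S (Yv M x)).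

Definition pc := pr P (fun x => Uv M x = Complier).
Definition pc_obs := obsZD true true / obsZ true - obsZD false true / obsZ false.
Definition complier_obs z S := obsZDY z z S - obsZDY (~~ z) z S * obsZ z / obsZ (~~ z).

(* When [det2] vanishes the first factor is [0] (see [pZUY1_sub_UY]), so the junk value
   [x / 0 = 0] of [cramer2] is harmless. *)
Definition uy_effect :=
  (complier_obs true [set 1] / obsZ true - complier_obs false [set 1] / obsZ false) *
  cramer2 (fun z (i : bool) => complier_obs z [set i%:R]) (fun z => obsZ z * pc_obs).

(* Cramer's rule for [pZDY z b 1]; the unknowns are the inverse response rates of the
   strata (D = b, Y) in [dy_term], and of the strata (Z = z, Y) in [zy_term]. *)
Definition dy_term z b := obsZDY z b [set 1] *
  cramer2 (fun z' (i : bool) => obsZDY z' b [set i%:R]) (fun z' => obsZD z' b).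
Definition zy_term z b := obsZDY z b [set 1] *
  cramer2 (fun b' (i : bool) => obsZDY z b' [set i%:R]) (fun b' => obsZD z b').

Hypotheses (ivM : iv_assumptions P M) (rdM : rd_assumptions P M).

Let mZ : measurable_fun setT (Zv M). Proof. by case: ivM; tauto. Qed.
Let mD1 : measurable_fun setT (D1v M). Proof. by case: ivM; tauto. Qed.
Let mD0 : measurable_fun setT (D0v M). Proof. by case: ivM; tauto. Qed.
Let mY1 : measurable_fun setT (Y1v M). Proof. by case: ivM; tauto. Qed.
Let mY0 : measurable_fun setT (Y0v M). Proof. by case: ivM; tauto. Qed.
Let mRD : measurable_fun setT (RDv M). Proof. by case: ivM; tauto. Qed.
Let mRY : measurable_fun setT (RYv M). Proof. by case: ivM; tauto. Qed.
Let mU : measurable_fun setT (Uv M). Proof. exact: measurable_status_of. Qed.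
Let mD : measurable_fun setT (Dv M). Proof. exact: measurable_fun_ifT. Qed.
Let mY : measurable_fun setT (Yv M). Proof. exact: measurable_fun_ifT. Qed.
#[local] Hint Resolve mZ mD1 mD0 mY1 mY0 mRD mRY mU mD mY : core.

Ltac mevent_tac := repeat first
  [ apply: mevent_and | apply: mevent_or | apply: mevent_not | exact: mevent_cst
  | apply: mevent_pair_eq
  | apply: mevent_eq; [by auto | by [] || exact: measurable_set1]
  | apply: mevent_preimage; [by auto | by [] || exact: measurableT || assumption] ].

Ltac event_iff := move=> x /=; rewrite ?pair_equalE ?and4E /setT /=; tauto.

Let no_defier : forall x, D0v M x -> D1v M x. Proof. by case: ivM; tauto. Qed.
Let exclusion : forall x, Uv M x = Always \/ Uv M x = Never -> Y1v M x = Y0v M x.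
Proof. by case: ivM; tauto. Qed.
Let Zindep : indep P (Zv M) (fun x => (D1v M x, D0v M x, Y1v M x, Y0v M x)).
Proof. by case: ivM; tauto. Qed.
Let RDcindep : cindep P (RDv M) (fun x => (Uv M x, Dv M x, Yv M x)) (Zv M).
Proof. by case: rdM. Qed.

Lemma complier_D x : Uv M x = Complier -> Dv M x = Zv M x.
Proof. by rewrite /Uv /Dv; case: (D1v M x); case: (D0v M x); case: (Zv M x). Qed.

Lemma taker_D b x : Uv M x = taker b -> Dv M x = b.
Proof. by rewrite /Uv /Dv; case: b; case: (D1v M x); case: (D0v M x); case: (Zv M x). Qed.

Lemma complier_or_taker x : Uv M x = Complier \/ Uv M x = taker (Dv M x).
Proof.
rewrite /Uv /Dv; move: (@no_defier x).
by case: (D1v M x); case: (D0v M x); case: (Zv M x) => //= h;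
  (by left) || (by right) || by have := h isT.
Qed.

Lemma pcE : pc = pr P (fun x => D1v M x = true) - pr P (fun x => D0v M x = true).
Proof.
have mD0t : mevent (fun x => D0v M x = true) by mevent_tac.
rewrite (pr_split P _ mD0t); last by mevent_tac.
rewrite (@eq_pr _ _ _ P (fun x => D1v M x = true /\ D0v M x = true) (fun x => D0v M x = true)).
  rewrite addrC addKr; apply: eq_pr => x; rewrite /Uv.
  by case: (D1v M x); case: (D0v M x); intuition discriminate.
by move=> x; split=> [[]//|D0x]; split=> //; exact: no_defier.
Qed.

Lemma caceE :
  cace P M = (fine (\int[P]_x (Y1v M x)%:E) - fine (\int[P]_x (Y0v M x)%:E)) / pc.
Proof.
have [iY1 iY0] : P.-integrable setT (fun x => (Y1v M x)%:E) /\
    P.-integrable setT (fun x => (Y0v M x)%:E) by case: ivM; tauto.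
rewrite /cace; congr (_ / _).
rewrite integral_mkcond (_ : _ \_ _ = fun x => (Y1v M x)%:E - (Y0v M x)%:E)%E; last first.
  apply/funext => x; rewrite /patch; case: ifPn => //; rewrite notin_setE /= => nc.
  rewrite exclusion ?subee //; move: (@no_defier x) nc; rewrite /Uv.
  by case: (D1v M x); case: (D0v M x) => //= h _; [left | have := h isT | right].
by rewrite integralB_EFin // fineB ?integrable_fin_num.
Qed.

Lemma obsZ_gt0 z : 0 < obsZ z.
Proof. by case: rdM => _ /(_ z); apply: Pr_gt0 => //; mevent_tac. Qed.

Lemma prZ_gt0 z : 0 < pr P (fun x => Zv M x = z).
Proof. by apply: lt_le_trans (obsZ_gt0 z) _; apply: le_pr => [||x []]; mevent_tac. Qed.

Lemma pr_Z_potential z A : measurable A ->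
  pr P (fun x => Zv M x = z /\ A (Uv M x, Dv M x, Yv M x)) =
  pr P (fun x => Zv M x = z) * pr P (fun x => A (Uv M x, Dz z x, Yz z x)).
Proof.
move=> mA; have mpot : measurable_fun setT (fun x => (D1v M x, D0v M x, Y1v M x, Y0v M x)).
  by do 3 apply: measurable_fun_pair => //.
have mB : measurable (potential_at z @^-1` A).
  by rewrite -[_ @^-1` _]setTI; exact: measurable_potential_at.
apply: (indep_pr mZ mpot Zindep (SA := [set z]) _ mB) => // x.
by rewrite /Dv /Yv /=; split=> -[Zx]; rewrite Zx.
Qed.

(* Ignorability of R^D given Z and independence of Z from the potential values: the
   complete cases of arm z are a representative sample of (U, D(z), Y(z)). *)
Lemma pr_potentialE z A : measurable A ->
  pr P (fun x => A (Uv M x, Dz z x, Yz z x)) =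
  pr P (fun x => RDv M x = true /\ Zv M x = z /\ A (Uv M x, Dv M x, Yv M x)) / obsZ z.
Proof.
move=> mA; have mUDY : measurable_fun setT (fun x => (Uv M x, Dv M x, Yv M x)).
  by do 2 apply: measurable_fun_pair => //.
set E := fun x => RDv M x = true /\ Zv M x = z /\ A (Uv M x, Dv M x, Yv M x).
have cind : pr P E * pr P (fun x => Zv M x = z) =
    obsZ z * pr P (fun x => Zv M x = z /\ A (Uv M x, Dv M x, Yv M x)).
  apply: (cindep_at_pr mRD mUDY _ (RDcindep z) (SA := [set true]) (SB := A)) => //;
    by [mevent_tac | move=> x; rewrite /E /=; tauto].
have -> : pr P E = obsZ z * pr P (fun x => A (Uv M x, Dz z x, Yz z x)).
  apply: (mulIf (lt0r_neq0 (prZ_gt0 z))); rewrite cind pr_Z_potential //; ring.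
by rewrite [obsZ z * _]mulrC mulfK // lt0r_neq0 ?obsZ_gt0.
Qed.

Lemma pr_Dz z : pr P (fun x => Dz z x = true) = obsZD z true / obsZ z.
Proof.
have mA : measurable ([set: status] `*` [set true] `*` [set: R]).
  by apply: measurableX => //; exact: measurableX.
transitivity (pr P (fun x => (setT `*` [set true] `*` setT) (Uv M x, Dz z x, Yz z x))).
  by apply: eq_pr => x; rewrite /setT /=; tauto.
by rewrite pr_potentialE //; congr (_ / _); apply: eq_pr => x; rewrite /setT /=; tauto.
Qed.

Lemma pr_UYz z u S : measurable S ->
  pr P (fun x => Uv M x = u /\ S (Yz z x)) = pZUY z u S / obsZ z.
Proof.
move=> mS; have mA : measurable ([set u] `*` [set: bool] `*` S).
  by apply: measurableX => //; exact: measurableX.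
transitivity (pr P (fun x => ([set u] `*` [set: bool] `*` S) (Uv M x, Dz z x, Yz z x))).
  by apply: eq_pr => x; rewrite /setT /=; tauto.
by rewrite pr_potentialE //; congr (_ / _); apply: eq_pr => x; rewrite /setT /=; tauto.
Qed.

Lemma pr_Yz z S : measurable S -> pr P (fun x => S (Yz z x)) = pZY z S / obsZ z.
Proof.
move=> mS; have mA : measurable ([set: status * bool] `*` S) by exact: measurableX.
transitivity (pr P (fun x => ([set: status * bool] `*` S) (Uv M x, Dz z x, Yz z x))).
  by apply: eq_pr => x; rewrite /setT /=; tauto.
by rewrite pr_potentialE //; congr (_ / _); apply: eq_pr => x; rewrite /setT /=; tauto.
Qed.

Lemma taker_Yz b z x : Uv M x = taker b -> Yz z x = Y1v M x.
Proof. by case: z => //= Ux; rewrite exclusion //; case: b Ux => ->; auto. Qed.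

Lemma pZUY_taker b z S : measurable S ->
  pZUY z (taker b) S = obsZ z * pr P (fun x => Uv M x = taker b /\ S (Y1v M x)).
Proof.
move=> mS; transitivity (obsZ z * pr P (fun x => Uv M x = taker b /\ S (Yz z x))).
  by rewrite pr_UYz // mulrC divfK // lt0r_neq0 ?obsZ_gt0.
by congr (_ * _); apply: eq_pr => x; split=> -[Ux]; rewrite (taker_Yz z Ux).
Qed.

Lemma pZUY_complierT z : pZUY z Complier setT = obsZ z * pc.
Proof.
transitivity (obsZ z * pr P (fun x => Uv M x = Complier /\ setT (Yz z x))).
  by rewrite pr_UYz // mulrC divfK // lt0r_neq0 ?obsZ_gt0.
by congr (_ * _); apply: eq_pr => x; rewrite /setT /=; tauto.
Qed.

Lemma pc_obsE : pc = pc_obs.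
Proof. by rewrite pcE -[D1v M]/(Dz true) -[D0v M]/(Dz false) !pr_Dz. Qed.

Lemma pr_Yz_sub_complier S : measurable S ->
  pr P (fun x => S (Yz true x)) - pr P (fun x => S (Yz false x)) =
  pr P (fun x => Uv M x = Complier /\ S (Yz true x)) -
  pr P (fun x => Uv M x = Complier /\ S (Yz false x)).
Proof.
move=> mS; have mC : mevent (fun x => Uv M x = Complier) by mevent_tac.
rewrite (pr_split P _ mC) ?(pr_split P (E := fun x => S (Yz false x)) _ mC); try by mevent_tac.
have -> : pr P (fun x => S (Yz true x) /\ Uv M x <> Complier) =
          pr P (fun x => S (Yz false x) /\ Uv M x <> Complier).
  apply: eq_pr => x; split=> -[SY nc]; split=> //; case: (complier_or_taker x) => // Ux;
    by move: SY; rewrite !(taker_Yz _ Ux).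
rewrite opprD addrACA subrr addr0; congr (_ - _); apply: eq_pr => x; tauto.
Qed.

Lemma obsZDY_taker z S : obsZDY (~~ z) z S = pZUYr (~~ z) (taker z) S.
Proof.
apply: eq_pr => x; split=> [[RDx [Zx [Dx [RYx SY]]]]|[RDx [Zx [Ux [RYx SY]]]]].
  case: (complier_or_taker x) => Ux; last by rewrite Ux Dx.
  by move: Dx; rewrite complier_D // Zx; case: z {Zx}.
by rewrite (taker_D Ux).
Qed.

Lemma obsZDY_complier z S : measurable S ->
  obsZDY z z S = pZUYr z (taker z) S + pZUYr z Complier S.
Proof.
move=> mS; rewrite -pr_or; last by move=> x [_ [_ [-> _]]] [_ [_ []]]; case: z.
- apply: eq_pr => x; split=> [[RDx [Zx [Dx RYSY]]]|].
    by case: (complier_or_taker x) => Ux; [right | left; rewrite Ux Dx].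
  by case=> -[RDx [Zx [Ux RYSY]]]; do 2 split=> //; split=> //;
    [exact: taker_D | rewrite complier_D].
all: by mevent_tac.
Qed.

(* If the takers' complete cases split between the arms in proportion to [obsZ], removing
   them from the cell [D = z] of arm [z] isolates the compliers. *)
Lemma pZUYr_complier z S : measurable S ->
  (exists h, forall z', pZUYr z' (taker z) S = obsZ z' * h) ->
  pZUYr z Complier S = complier_obs z S.
Proof.
move=> mS [h takerE]; rewrite /complier_obs obsZDY_complier // obsZDY_taker !takerE.
by field; rewrite lt0r_neq0 ?obsZ_gt0.
Qed.

Lemma pr_ZDY z b y : pr P (fun x => (Zv M x = z /\ Dv M x = b) /\ Yv M x = y) =
  pr P (fun x => Zv M x = z) / obsZ z * pZDY z b y.
Proof.
have mA : measurable ([set: status] `*` [set b] `*` [set y]).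
  by apply: measurableX; [exact: measurableX | exact: measurable_set1].
transitivity (pr P (fun x => Zv M x = z /\ ([set: status] `*` [set b] `*` [set y])
  (Uv M x, Dv M x, Yv M x))); first by apply: eq_pr; event_iff.
rewrite pr_Z_potential // pr_potentialE // mulrA mulrAC; congr (_ * _).
by apply: eq_pr; event_iff.
Qed.

Lemma pZY1_split z : pZY z [set 1] = \sum_(b : bool) pZDY z b 1.
Proof.
rewrite /pZY (pr_split_bool P _ mD) ?big_bool 1?addrC; last by mevent_tac.
by congr (_ + _); apply: eq_pr; event_iff.
Qed.

Lemma obsZD_binary z b : binaryY M -> obsZD z b = pZDY z b 0 + pZDY z b 1.
Proof.
move=> binY; have mE : mevent (fun x => RDv M x = true /\ Zv M x = z /\ Dv M x = b).
  by mevent_tac.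
exact: (pr_split_binary P mY binY mE).
Qed.

Lemma pZY_binary z S : binaryY M -> measurable S ->
  pZY z S = \1_S 0 * (obsZ z - pZY z [set 1]) + \1_S 1 * pZY z [set 1].
Proof.
move=> binY mS; set E := fun x => RDv M x = true /\ Zv M x = z.
have EE S' : pZY z S' = pr P (fun x => E x /\ S' (Yv M x)).
  by apply: eq_pr => x; rewrite /E; tauto.
by rewrite !EE pr_binary1 //; mevent_tac.
Qed.

Lemma pZUY_split_binary z u : binaryY M ->
  pZUY z u setT = pZUY z u [set 0] + pZUY z u [set 1].
Proof.
move=> binY; have mE : mevent (fun x => RDv M x = true /\ Zv M x = z /\ Uv M x = u).
  by mevent_tac.
have -> : pZUY z u setT = pr P (fun x => RDv M x = true /\ Zv M x = z /\ Uv M x = u).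
  by apply: eq_pr; event_iff.
by rewrite (pr_split_binary P mY binY mE); congr (_ + _); apply: eq_pr; event_iff.
Qed.

Lemma pZUY_binary z u S : binaryY M -> measurable S ->
  pZUY z u S = \1_S 0 * (pZUY z u setT - pZUY z u [set 1]) + \1_S 1 * pZUY z u [set 1].
Proof.
move=> binY mS; set E := fun x => RDv M x = true /\ Zv M x = z /\ Uv M x = u.
have EE S' : pZUY z u S' = pr P (fun x => E x /\ S' (Yv M x)).
  by apply: eq_pr => x; rewrite /E; tauto.
have -> : pZUY z u setT = pr P E by apply: eq_pr => x; rewrite /E /setT /=; tauto.
by rewrite !EE pr_binary1 //; mevent_tac.
Qed.

Section CaseZD.
Hypothesis caseZD : case_ZD P M.

Let RYcindep :
  cindep P (RYv M) (fun x => (Uv M x, Yv M x)) (fun x => (Zv M x, Dv M x, RDv M x)).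
Proof. by case: caseZD. Qed.

Lemma pZDY_ZD z b S : measurable S ->
  pr P (fun x => (RDv M x = true /\ Zv M x = z /\ S (Yv M x)) /\ Dv M x = b) =
  obsZDY z b S * obsZD z b / obsZDY z b setT.
Proof.
move=> mS; have mUY : measurable_fun setT (fun x => (Uv M x, Yv M x)).
  exact: measurable_fun_pair.
have pos : 0 < obsZDY z b setT.
  by case: caseZD => _ /(_ z b); apply: Pr_gt0; [event_iff | mevent_tac].
have -> : obsZDY z b S * obsZD z b = obsZDY z b setT *
    pr P (fun x => (RDv M x = true /\ Zv M x = z /\ S (Yv M x)) /\ Dv M x = b).
  apply: (cindep_at_pr mRY mUY _ (RYcindep (z, b, true)) (SA := [set true])
    (SB := [set: status] `*` S)) => //;
    first [exact: measurableX | by mevent_tac | event_iff].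
by rewrite mulrAC divff ?mul1r // lt0r_neq0.
Qed.

Lemma pZY_ZD z S : measurable S ->
  pZY z S = \sum_(b : bool) obsZDY z b S * obsZD z b / obsZDY z b setT.
Proof.
move=> mS; rewrite /pZY (pr_split_bool P _ mD) ?big_bool ?pZDY_ZD 1?addrC //.
by mevent_tac.
Qed.

End CaseZD.

Section CaseUD.
Hypothesis caseUD : case_UD P M.

Let RYcindep :
  cindep P (RYv M) (fun x => (Zv M x, Yv M x)) (fun x => (Uv M x, Dv M x, RDv M x)).
Proof. by case: caseUD. Qed.

Lemma pZUYr_UD u b z S : measurable S ->
  (forall x, Uv M x = u -> Zv M x = z -> Dv M x = b) ->
  pZUYr z u S * pr P (fun x => Uv M x = u /\ Dv M x = b /\ RDv M x = true) =
  pr P (fun x => RYv M x = true /\ Uv M x = u /\ Dv M x = b /\ RDv M x = true) * pZUY z u S.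
Proof.
move=> mS UZD; have mZY : measurable_fun setT (fun x => (Zv M x, Yv M x)).
  exact: measurable_fun_pair.
apply: (cindep_at_pr mRY mZY _ (RYcindep (u, b, true)) (SA := [set true])
  (SB := [set z] `*` S)) => //; first [exact: measurableX | by mevent_tac |
  by move=> x /=; rewrite ?pair_equalE; have := UZD x; tauto].
Qed.

Lemma taker_proportional_UD z S : measurable S ->
  exists h, forall z', pZUYr z' (taker z) S = obsZ z' * h.
Proof.
move=> mS; apply: (proportional_of_scaled
  (n := pr P (fun x => Uv M x = taker z /\ Dv M x = z /\ RDv M x = true))
  (c := pr P (fun x => RYv M x = true /\ Uv M x = taker z /\ Dv M x = z /\ RDv M x = true) *
        pr P (fun x => Uv M x = taker z /\ S (Y1v M x)))) => [z'|N0 z'].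
  rewrite (pZUYr_UD mS (b := z)) => [|x /taker_D //].
  by rewrite pZUY_taker // mulrCA mulrA.
apply/eqP; rewrite eq_le pr_ge0 andbT -N0.
by apply: le_pr => [||x [RDx [_ [Ux _]]]]; [mevent_tac | mevent_tac | rewrite (taker_D Ux)].
Qed.

Lemma pr_complier_Yz_UD z S : measurable S ->
  pr P (fun x => Uv M x = Complier /\ S (Yz z x)) =
  complier_obs z S / complier_obs z setT * pc_obs.
Proof.
move=> mS; have UZD x : Uv M x = Complier -> Zv M x = z -> Dv M x = z by move/complier_D ->.
have NE : pr P (fun x => Uv M x = Complier /\ Dv M x = z /\ RDv M x = true) =
    pZUY z Complier setT.
  by apply: eq_pr => x; split=> [[Ux [Dx RDx]]|[RDx [Zx [Ux _]]]];
    [rewrite -(complier_D Ux) | rewrite (complier_D Ux)].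
have rhoE : pr P (fun x => RYv M x = true /\ Uv M x = Complier /\ Dv M x = z /\
    RDv M x = true) = pZUYr z Complier setT.
  by apply: eq_pr => x; split=> [[RYx [Ux [Dx RDx]]]|[RDx [Zx [Ux [RYx _]]]]];
    [rewrite -(complier_D Ux) | rewrite (complier_D Ux)].
have pos : 0 < pZUYr z Complier setT.
  by rewrite -rhoE; case: caseUD => _ /(_ z); apply: Pr_gt0; [event_iff | mevent_tac].
have := pZUYr_UD mS UZD; rewrite NE rhoE pZUY_complierT.
rewrite -pc_obsE pr_UYz // -!pZUYr_complier //; try exact: taker_proportional_UD.
move=> eS; have -> : pZUY z Complier S = pZUYr z Complier S * (obsZ z * pc) /
    pZUYr z Complier setT by rewrite eS mulrAC divff ?mul1r // lt0r_neq0.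
by field; rewrite !lt0r_neq0 ?obsZ_gt0.
Qed.

End CaseUD.

Section CaseUY.
Hypothesis caseUY : case_UY P M.

Let RYcindep :
  cindep P (RYv M) (fun x => (Zv M x, Dv M x)) (fun x => (Uv M x, Yv M x, RDv M x)).
Proof. by case: caseUY. Qed.
Let binY : binaryY M. Proof. by case: caseUY => _ []. Qed.

Lemma pZUYr_UY u y b z : (forall x, Uv M x = u -> Zv M x = z -> Dv M x = b) ->
  pZUYr z u [set y] * pr P (fun x => Uv M x = u /\ Yv M x = y /\ RDv M x = true) =
  pr P (fun x => RYv M x = true /\ Uv M x = u /\ Yv M x = y /\ RDv M x = true) *
  pZUY z u [set y].
Proof.
move=> UZD; have mZD : measurable_fun setT (fun x => (Zv M x, Dv M x)).
  exact: measurable_fun_pair.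
apply: (cindep_at_pr mRY mZD _ (RYcindep (u, y, true)) (SA := [set true])
  (SB := [set z] `*` [set b])) => //; first [exact: measurableX | by mevent_tac |
  by move=> x /=; rewrite ?pair_equalE; have := UZD x; tauto].
Qed.

Lemma taker_proportional_UY z y : exists h, forall z', pZUYr z' (taker z) [set y] = obsZ z' * h.
Proof.
apply: (proportional_of_scaled
  (n := pr P (fun x => Uv M x = taker z /\ Yv M x = y /\ RDv M x = true))
  (c := pr P (fun x => RYv M x = true /\ Uv M x = taker z /\ Yv M x = y /\ RDv M x = true) *
        pr P (fun x => Uv M x = taker z /\ [set y] (Y1v M x)))) => [z'|N0 z'].
  rewrite (pZUYr_UY _ (fun x Ux _ => taker_D Ux)).
  by rewrite pZUY_taker; [exact: mulrCA | exact: measurable_set1].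
apply/eqP; rewrite eq_le pr_ge0 andbT -N0.
by apply: le_pr => [||x]; [mevent_tac | mevent_tac | rewrite /=; tauto].
Qed.

Let t (i : bool) := pr P (fun x => Uv M x = Complier /\ Yv M x = i%:R /\ RDv M x = true) /
  pr P (fun x => RYv M x = true /\ Uv M x = Complier /\ Yv M x = i%:R /\ RDv M x = true).

Let rho_gt0 (i : bool) : 0 < pr P (fun x =>
  RYv M x = true /\ Uv M x = Complier /\ Yv M x = i%:R /\ RDv M x = true).
Proof. by case: caseUY => _ [_ /(_ i)]; apply: Pr_gt0; [event_iff | mevent_tac]. Qed.

Lemma pZUY_complier_UY z (i : bool) :
  pZUY z Complier [set i%:R] = complier_obs z [set i%:R] * t i.
Proof.
rewrite -pZUYr_complier; [|exact: measurable_set1 | exact: taker_proportional_UY].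
rewrite /t mulrA (pZUYr_UY _ (fun x Ux Zx => etrans (complier_D Ux) Zx)).
by rewrite mulrAC divff ?mul1r // lt0r_neq0 ?rho_gt0.
Qed.

Lemma pc_obs_gt0 : 0 < pc_obs.
Proof.
rewrite -pc_obsE; apply: lt_le_trans (rho_gt0 true) _.
by apply: le_pr => [||x [_ []]]; mevent_tac.
Qed.

Lemma pZUY1_sub_UY :
  pZUY true Complier [set 1] / obsZ true - pZUY false Complier [set 1] / obsZ false = uy_effect.
Proof.
pose a z (i : bool) := complier_obs z [set i%:R].
have system z : a z false * t false + a z true * t true = obsZ z * pc_obs.
  by rewrite -!pZUY_complier_UY -pc_obsE -pZUY_complierT pZUY_split_binary.
rewrite -[[set 1]]/[set true%:R] !pZUY_complier_UY /uy_effect -/(a true true) -/(a false true).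
transitivity ((a true true / obsZ true - a false true / obsZ false) * t true); first by ring.
have [det0|det_neq0] := eqVneq (det2 a) 0; last by rewrite (cramer2_snd system det_neq0).
suff -> : a true true / obsZ true - a false true / obsZ false = 0 by rewrite !mul0r.
apply/eqP; rewrite subr_eq0 eqr_div ?lt0r_neq0 ?obsZ_gt0 //; apply/eqP.
apply: (mulIf (lt0r_neq0 pc_obs_gt0)); rewrite -!mulrA.
exact/esym/(det2_eq0_snd system).
Qed.

Lemma pr_complier_Yz_UY S : measurable S ->
  pr P (fun x => Uv M x = Complier /\ S (Yz true x)) -
  pr P (fun x => Uv M x = Complier /\ S (Yz false x)) = (\1_S 1 - \1_S 0) * uy_effect.
Proof.
move=> mS; rewrite !pr_UYz // !(pZUY_binary _ _ binY mS) !pZUY_complierT -pZUY1_sub_UY.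
by field; rewrite !lt0r_neq0 ?obsZ_gt0.
Qed.

End CaseUY.

Section CaseDY.
Hypothesis caseDY : case_DY P M.

Let RYcindep :
  cindep P (RYv M) (fun x => (Zv M x, Uv M x)) (fun x => (Dv M x, Yv M x, RDv M x)).
Proof. by case: caseDY. Qed.
Let binY : binaryY M. Proof. by case: caseDY => _ []. Qed.

Let t b (i : bool) := pr P (fun x => Dv M x = b /\ Yv M x = i%:R /\ RDv M x = true) /
  pr P (fun x => RYv M x = true /\ Dv M x = b /\ Yv M x = i%:R /\ RDv M x = true).

Lemma pZDY_DY z b (i : bool) : pZDY z b i%:R = obsZDY z b [set i%:R] * t b i.
Proof.
have mZU : measurable_fun setT (fun x => (Zv M x, Uv M x)) by exact: measurable_fun_pair.
have pos : 0 < pr P (fun x =>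
    RYv M x = true /\ Dv M x = b /\ Yv M x = i%:R /\ RDv M x = true).
  by case: caseDY => _ [_ [_ [/(_ b i) + _]]]; apply: Pr_gt0; [event_iff | mevent_tac].
rewrite /t mulrA.
have -> : obsZDY z b [set i%:R] *
    pr P (fun x => Dv M x = b /\ Yv M x = i%:R /\ RDv M x = true) =
    pr P (fun x => RYv M x = true /\ Dv M x = b /\ Yv M x = i%:R /\ RDv M x = true) *
    pZDY z b i%:R.
  apply: (cindep_at_pr mRY mZU _ (RYcindep (b, i%:R, true)) (SA := [set true])
    (SB := [set z] `*` [set: status])) => //;
    first [exact: measurableX | by mevent_tac | event_iff].
by rewrite mulrAC divff ?mul1r // lt0r_neq0.
Qed.

Lemma pZDY1_DY z b : pZDY z b 1 = dy_term z b.
Proof.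
pose a z' (i : bool) := obsZDY z' b [set i%:R].
have system z' : a z' false * t b false + a z' true * t b true = obsZD z' b.
  by rewrite -!pZDY_DY obsZD_binary.
have det_neq0 : det2 a != 0.
  apply/eqP => det0; case: caseDY => _ [_ [_ [_ /(_ b)]]]; apply.
  apply: (cindep_at_det2 mY binY mZ); first by mevent_tac.
  transitivity (det2 (fun z' i => a z' i * t b i)); last by rewrite det2_scale_cols det0 mul0r.
  by congr det2; apply/funext => z'; apply/funext => i; rewrite -pZDY_DY; apply: eq_pr; event_iff.
by rewrite -[1]/(true%:R) pZDY_DY /dy_term (cramer2_snd system det_neq0).
Qed.

End CaseDY.

Section CaseZY.
Hypothesis caseZY : case_ZY P M.

Let RYcindep :
  cindep P (RYv M) (fun x => (Uv M x, Dv M x)) (fun x => (Zv M x, Yv M x, RDv M x)).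
Proof. by case: caseZY. Qed.
Let binY : binaryY M. Proof. by case: caseZY => _ []. Qed.

Let t z (i : bool) := pr P (fun x => Zv M x = z /\ Yv M x = i%:R /\ RDv M x = true) /
  pr P (fun x => RYv M x = true /\ Zv M x = z /\ Yv M x = i%:R /\ RDv M x = true).

Lemma pZDY_ZY z b (i : bool) : pZDY z b i%:R = obsZDY z b [set i%:R] * t z i.
Proof.
have mUD : measurable_fun setT (fun x => (Uv M x, Dv M x)) by exact: measurable_fun_pair.
have pos : 0 < pr P (fun x =>
    RYv M x = true /\ Zv M x = z /\ Yv M x = i%:R /\ RDv M x = true).
  by case: caseZY => _ [_ [_ [/(_ z i) + _]]]; apply: Pr_gt0; [event_iff | mevent_tac].
rewrite /t mulrA.
have -> : obsZDY z b [set i%:R] *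
    pr P (fun x => Zv M x = z /\ Yv M x = i%:R /\ RDv M x = true) =
    pr P (fun x => RYv M x = true /\ Zv M x = z /\ Yv M x = i%:R /\ RDv M x = true) *
    pZDY z b i%:R.
  apply: (cindep_at_pr mRY mUD _ (RYcindep (z, i%:R, true)) (SA := [set true])
    (SB := [set: status] `*` [set b])) => //;
    first [exact: measurableX | by mevent_tac | event_iff].
by rewrite mulrAC divff ?mul1r // lt0r_neq0.
Qed.

Lemma pZDY1_ZY z b : pZDY z b 1 = zy_term z b.
Proof.
pose a b' (i : bool) := obsZDY z b' [set i%:R].
have system b' : a b' false * t z false + a b' true * t z true = obsZD z b'.
  by rewrite -!pZDY_ZY obsZD_binary.
have det_neq0 : det2 a != 0.
  apply/eqP => det0; case: caseZY => _ [_ [_ [_ /(_ z)]]]; apply.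
  apply: (cindep_at_det2 mY binY mD); first by mevent_tac.
  transitivity (det2 (fun b' i => a b' i * t z i * (pr P (fun x => Zv M x = z) / obsZ z))).
    by congr det2; apply/funext => b'; apply/funext => i; rewrite pr_ZDY -pZDY_ZY mulrC.
  by rewrite !det2_scale_cols det0 !mul0r.
by rewrite -[1]/(true%:R) pZDY_ZY /zy_term (cramer2_snd system det_neq0).
Qed.

End CaseZY.

End Model.

Section TwoLaws.
Context {R : realType}.
Context {d1} {T1 : measurableType d1} (P1 : probability T1 R) (f1 g1 : T1 -> R).
Context {d2} {T2 : measurableType d2} (P2 : probability T2 R) (f2 g2 : T2 -> R).
Hypotheses (mf1 : measurable_fun setT f1) (mg1 : measurable_fun setT g1).
Hypotheses (mf2 : measurable_fun setT f2) (mg2 : measurable_fun setT g2).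
Hypotheses (if1 : P1.-integrable setT (fun x => (f1 x)%:E))
  (ig1 : P1.-integrable setT (fun x => (g1 x)%:E)).
Hypotheses (if2 : P2.-integrable setT (fun x => (f2 x)%:E))
  (ig2 : P2.-integrable setT (fun x => (g2 x)%:E)).

Let integral_push d (T : measurableType d) (Q : probability T R) (f : T -> R) :
  measurable_fun setT f -> Q.-integrable setT (fun x => (f x)%:E) ->
  (\int[Q]_x (f x)%:E = \int[pushforward Q f]_(y in setT) y%:E)%E /\
  (pushforward Q f).-integrable setT (fun y : R => y%:E).
Proof.
move=> mf fi; split; first by rewrite integral_pushforward.
by apply: integrable_pushforward => //; exact: measurable_realfun.EFin_measurable.
Qed.

(* Integrate [y] against the equal measures law(f1) + law(g2) and law(f2) + law(g1). *)
Lemma mean_sub_eq_of_law_sub :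
  (forall S, measurable S ->
    pr P1 (fun x => S (f1 x)) - pr P1 (fun x => S (g1 x)) =
    pr P2 (fun x => S (f2 x)) - pr P2 (fun x => S (g2 x))) ->
  fine (\int[P1]_x (f1 x)%:E) - fine (\int[P1]_x (g1 x)%:E) =
  fine (\int[P2]_x (f2 x)%:E) - fine (\int[P2]_x (g2 x)%:E).
Proof.
move=> laws.
have [ef1 pf1] := integral_push mf1 if1; have [eg1 pg1] := integral_push mg1 ig1.
have [ef2 pf2] := integral_push mf2 if2; have [eg2 pg2] := integral_push mg2 ig2.
have sums : (\int[measure_add (pushforward P1 f1) (pushforward P2 g2)]_(y in setT) y%:E =
    \int[measure_add (pushforward P2 f2) (pushforward P1 g1)]_(y in setT) y%:E)%E.
  move=> ? ? ? ?; apply: eq_measure_integral => A mA _.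
  rewrite /= /msum !big_ord_recl !big_ord0 /= !adde0 /pushforward.
  rewrite -[f2 @^-1` A]/[set x | A (f2 x)] -[g1 @^-1` A]/[set x | A (g1 x)].
  rewrite -[f1 @^-1` A]/[set x | A (f1 x)] -[g2 @^-1` A]/[set x | A (g2 x)].
  rewrite !prE; try exact: mevent_preimage.
  by rewrite -!EFinD; congr (_%:E); have := laws A mA; lra.
move: (sums mf1 mg2 mf2 mg1); rewrite !integral_measure_add // -ef1 -eg1 -ef2 -eg2.
move/(congr1 fine).
rewrite (fineD (integrable_fin_num measurableT if1) (integrable_fin_num measurableT ig2)).
rewrite (fineD (integrable_fin_num measurableT if2) (integrable_fin_num measurableT ig1)).
lra.
Qed.

End TwoLaws.

Section ObservedLaw.
Context {R : realType}.

Section Representation.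
Context {d} {T : measurableType d} (P : probability T R) (M : ivmodel R T).

Lemma obsZE z :
  obsZ P M z = pr P (fun x => ([set z] `*` [set true] `*` setT `*` setT `*` setT) (obs M x)).
Proof. by apply: eq_pr => x; rewrite /obs /setT /=; tauto. Qed.

Lemma obsZDE z b :
  obsZD P M z b = pr P (fun x => ([set z] `*` [set true] `*` [set b] `*` setT `*` setT) (obs M x)).
Proof.
apply: eq_pr => x; rewrite /obs /setT /=.
by case: (RDv M x) => /=; intuition discriminate.
Qed.

Lemma obsZDYE z b S : obsZDY P M z b S =
  pr P (fun x => ([set z] `*` [set true] `*` [set b] `*` [set true] `*` S) (obs M x)).
Proof.
apply: eq_pr => x; rewrite /obs /=.
by case: (RDv M x); case: (RYv M x) => /=; intuition discriminate.
Qed.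

End Representation.

Context {d1} {T1 : measurableType d1} (P1 : probability T1 R) (M1 : ivmodel R T1).
Context {d2} {T2 : measurableType d2} (P2 : probability T2 R) (M2 : ivmodel R T2).
Hypothesis same_law : same_obs_law P1 M1 P2 M2.

Let pr_obs_eq (A B C D : set bool) (S : set R) : measurable S ->
  pr P1 (fun x => (A `*` B `*` C `*` D `*` S) (obs M1 x)) =
  pr P2 (fun x => (A `*` B `*` C `*` D `*` S) (obs M2 x)).
Proof.
move=> mS; rewrite /pr -!/(_ @^-1` _) same_law //.
by apply: measurableX => //; apply: measurableX => //; apply: measurableX => //; exact: measurableX.
Qed.

Lemma obsZ_eq z : obsZ P1 M1 z = obsZ P2 M2 z.
Proof. by rewrite !obsZE pr_obs_eq. Qed.

Lemma obsZD_eq z b : obsZD P1 M1 z b = obsZD P2 M2 z b.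
Proof. by rewrite !obsZDE pr_obs_eq. Qed.

Lemma obsZDY_eq z b S : measurable S -> obsZDY P1 M1 z b S = obsZDY P2 M2 z b S.
Proof. by move=> mS; rewrite !obsZDYE pr_obs_eq. Qed.

Lemma complier_obs_eq z S : measurable S -> complier_obs P1 M1 z S = complier_obs P2 M2 z S.
Proof. by move=> mS; rewrite /complier_obs !obsZDY_eq // !obsZ_eq. Qed.

Lemma pc_obs_eq : pc_obs P1 M1 = pc_obs P2 M2.
Proof. by rewrite /pc_obs !obsZD_eq !obsZ_eq. Qed.

Lemma uy_effect_eq : uy_effect P1 M1 = uy_effect P2 M2.
Proof.
rewrite /uy_effect /cramer2 /det2 /= pc_obs_eq !obsZ_eq.
by rewrite !(complier_obs_eq _ (measurable_set1 _)).
Qed.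

Lemma dy_term_eq z b : dy_term P1 M1 z b = dy_term P2 M2 z b.
Proof. by rewrite /dy_term /cramer2 /det2 /= !obsZD_eq !(obsZDY_eq _ _ (measurable_set1 _)). Qed.

Lemma zy_term_eq z b : zy_term P1 M1 z b = zy_term P2 M2 z b.
Proof. by rewrite /zy_term /cramer2 /det2 /= !obsZD_eq !(obsZDY_eq _ _ (measurable_set1 _)). Qed.

End ObservedLaw.

Section Identification.
Context {R : realType}.
Context {d1} {T1 : measurableType d1} (P1 : probability T1 R) (M1 : ivmodel R T1).
Context {d2} {T2 : measurableType d2} (P2 : probability T2 R) (M2 : ivmodel R T2).
Hypotheses (iv1 : iv_assumptions P1 M1) (rd1 : rd_assumptions P1 M1).
Hypotheses (iv2 : iv_assumptions P2 M2) (rd2 : rd_assumptions P2 M2).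
Hypothesis same_law : same_obs_law P1 M1 P2 M2.

Lemma cace_eq_of_potential_laws :
  (forall S, measurable S ->
    pr P1 (fun x => S (Yz M1 true x)) - pr P1 (fun x => S (Yz M1 false x)) =
    pr P2 (fun x => S (Yz M2 true x)) - pr P2 (fun x => S (Yz M2 false x))) ->
  cace P1 M1 = cace P2 M2.
Proof.
move=> laws; rewrite !caceE // !pc_obsE // (pc_obs_eq same_law); congr (_ / _).
move: iv1 iv2 => [[_ [_ [_ [mY1 [mY0 _]]]]] [iY1 [iY0 _]]].
move=> [[_ [_ [_ [mY1' [mY0' _]]]]] [iY1' [iY0' _]]].
exact: mean_sub_eq_of_law_sub.
Qed.

Lemma cace_eq_of_pZY : (forall z S, measurable S -> pZY P1 M1 z S = pZY P2 M2 z S) ->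
  cace P1 M1 = cace P2 M2.
Proof.
move=> eq_pZY; apply: cace_eq_of_potential_laws => S mS.
by rewrite !pr_Yz // !eq_pZY // !(obsZ_eq same_law).
Qed.

Lemma cace_eq_of_complier_laws :
  (forall S, measurable S ->
    pr P1 (fun x => Uv M1 x = Complier /\ S (Yz M1 true x)) -
    pr P1 (fun x => Uv M1 x = Complier /\ S (Yz M1 false x)) =
    pr P2 (fun x => Uv M2 x = Complier /\ S (Yz M2 true x)) -
    pr P2 (fun x => Uv M2 x = Complier /\ S (Yz M2 false x))) ->
  cace P1 M1 = cace P2 M2.
Proof.
move=> laws; apply: cace_eq_of_potential_laws => S mS.
by rewrite !pr_Yz_sub_complier // laws.
Qed.

End Identification.

Lemma identifiable_ZD {R : realType} : cace_identifiable (R := R) (fun d T P M =>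
  iv_assumptions P M /\ rd_assumptions P M /\ case_ZD P M).
Proof.
move=> d1 T1 P1 M1 d2 T2 P2 M2 [iv1 [rd1 ZD1]] [iv2 [rd2 ZD2]] same_law.
apply: cace_eq_of_pZY => // z S mS; rewrite !pZY_ZD //; apply: eq_bigr => b _.
by rewrite !(obsZDY_eq same_law) // !(obsZD_eq same_law).
Qed.

Lemma identifiable_UD {R : realType} : cace_identifiable (R := R) (fun d T P M =>
  iv_assumptions P M /\ rd_assumptions P M /\ case_UD P M).
Proof.
move=> d1 T1 P1 M1 d2 T2 P2 M2 [iv1 [rd1 UD1]] [iv2 [rd2 UD2]] same_law.
apply: cace_eq_of_complier_laws => // S mS; rewrite !pr_complier_Yz_UD //.
by rewrite !(complier_obs_eq same_law) // (pc_obs_eq same_law).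
Qed.

Lemma identifiable_UY {R : realType} : cace_identifiable (R := R) (fun d T P M =>
  iv_assumptions P M /\ rd_assumptions P M /\ case_UY P M).
Proof.
move=> d1 T1 P1 M1 d2 T2 P2 M2 [iv1 [rd1 UY1]] [iv2 [rd2 UY2]] same_law.
apply: cace_eq_of_complier_laws => // S mS.
by rewrite !pr_complier_Yz_UY // (uy_effect_eq same_law).
Qed.

Lemma identifiable_DY {R : realType} : cace_identifiable (R := R) (fun d T P M =>
  iv_assumptions P M /\ rd_assumptions P M /\ case_DY P M).
Proof.
move=> d1 T1 P1 M1 d2 T2 P2 M2 [iv1 [rd1 DY1]] [iv2 [rd2 DY2]] same_law.
have [binY1 binY2] : binaryY M1 /\ binaryY M2 by case: DY1 => _ []; case: DY2 => _ [].
apply: cace_eq_of_pZY => // z S mS.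
rewrite (pZY_binary iv1 z binY1 mS) (pZY_binary iv2 z binY2 mS) !pZY1_split //.
rewrite (obsZ_eq same_law); congr (_ * (_ - _) + _ * _); apply: eq_bigr => b _.
all: by rewrite !pZDY1_DY // (dy_term_eq same_law).
Qed.

Lemma identifiable_ZY {R : realType} : cace_identifiable (R := R) (fun d T P M =>
  iv_assumptions P M /\ rd_assumptions P M /\ case_ZY P M).
Proof.
move=> d1 T1 P1 M1 d2 T2 P2 M2 [iv1 [rd1 ZY1]] [iv2 [rd2 ZY2]] same_law.
have [binY1 binY2] : binaryY M1 /\ binaryY M2 by case: ZY1 => _ []; case: ZY2 => _ [].
apply: cace_eq_of_pZY => // z S mS.
rewrite (pZY_binary iv1 z binY1 mS) (pZY_binary iv2 z binY2 mS) !pZY1_split //.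
rewrite (obsZ_eq same_law); congr (_ * (_ - _) + _ * _); apply: eq_bigr => b _.
all: by rewrite !pZDY1_ZY // (zy_term_eq same_law).
Qed.

Theorem theorem6 (R : realType) :
  (* (1ZD + 2Z) *)
  cace_identifiable (R := R) (fun d T P M =>
    iv_assumptions P M /\ rd_assumptions P M /\ case_ZD P M) /\
  (* (1UD + 2Z) *)
  cace_identifiable (R := R) (fun d T P M =>
    iv_assumptions P M /\ rd_assumptions P M /\ case_UD P M) /\
  (* (1UY + 2Z) *)
  cace_identifiable (R := R) (fun d T P M =>
    iv_assumptions P M /\ rd_assumptions P M /\ case_UY P M) /\
  (* (1DY + 2Z) *)
  cace_identifiable (R := R) (fun d T P M =>
    iv_assumptions P M /\ rd_assumptions P M /\ case_DY P M) /\
  (* (1ZY + 2Z) *)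
  cace_identifiable (R := R) (fun d T P M =>
    iv_assumptions P M /\ rd_assumptions P M /\ case_ZY P M).
Proof.
split; first exact: identifiable_ZD.
split; first exact: identifiable_UD.
split; first exact: identifiable_UY.
split; first exact: identifiable_DY.
exact: identifiable_ZY.
Qed.
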